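(* Let $n,m\ge 3$ and let $G=P_n\square P_m$ be the grid graph. Let $(p,q)$ be an interior vertex, taken as origin. Let $Q$ and $Q'$ be two opposite quadrants with respect to $(p,q)$. Let $A$ be a finite set of vertices all lying in $Q$, let $B$ be a finite set of vertices all lying in $Q'$, and let $C$ be a finite set of vertices all lying on the boundary of one of these two quadrants (i.e. all on the boundary of $Q$, or all on the boundary of $Q'$). Then there exist two neighbours of $(p,q)$, of the form $(p^*,q)$ and $(p,q^* )$, that are not resolved by any vertex of $\{(p,q)\}\cup A\cup B\cup C$.
   Context: The grid graph $P_n\square P_m$ has vertex set $\{(i,j):0\le i\le n-1,\ 0\le j\le m-1\}$, with $(i,j)$ adjacent to $(k,l)$ iff $|i-k|+|j-l|=1$; distance $d((i,j),(k,l))=|i-k|+|j-l|$. A vertex $w$ resolves $x,y$ if $d(w,x)\ne d(w,y)$. Interior vertices are those of degree 4. With respect to an origin $(p,q)$, the four quadrants are $\{(x,y):x>p,y>q\}$, $\{(x,y):x<p,y>q\}$, $\{(x,y):x<p,y<q\}$, $\{(x,y):x>p,y<q\}$ (the axes and origin belong to no quadrant). The boundary of a quadrant consists of the points on the two half-axes bounding it, excluding the origin; e.g. the boundary of $\{x>p,y>q\}$ is $\{(x,q):x>p\}\cup\{(p,y):y>q\}$. Two quadrants are opposite if their boundaries share no point (i.e. $\{x>p,y>q\}$ with $\{x<p,y<q\}$, and $\{x<p,y>q\}$ with $\{x>p,y<q\}$). *)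

From mathcomp Require Import all_boot all_order.
Set Implicit Arguments. Unset Strict Implicit. Unset Printing Implicit Defensive.

Notation vertex n m := (prod (ordinal n) (ordinal m)).

Definition distn (a b : nat) : nat := (a - b) + (b - a).

(* Manhattan (graph) distance d((i,j),(k,l)) = |i-k| + |j-l| *)
Definition gdist n m (x y : vertex n m) : nat :=
  distn x.1 y.1 + distn x.2 y.2.

Definition gadj n m (x y : vertex n m) : bool := gdist x y == 1.

Definition degree n m (x : vertex n m) : nat := #|[set y : vertex n m | gadj x y]|.

Definition interior n m (x : vertex n m) : bool := degree x == 4.

Definition resolves n m (w x y : vertex n m) : bool := gdist w x != gdist w y.

Definition side (b : bool) (c a : nat) : bool := if b then c < a else a < c.

Definition quadrant n m (sx sy : bool) (o : vertex n m) : {set vertex n m} :=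
  [set v : vertex n m | side sx o.1 v.1 && side sy o.2 v.2].

(* Boundary of that quadrant: the two bounding half-axes minus the origin. *)
Definition qboundary n m (sx sy : bool) (o : vertex n m) : {set vertex n m} :=
  [set v : vertex n m | (side sx o.1 v.1 && (v.2 == o.2 :> nat))
        || ((v.1 == o.1 :> nat) && side sy o.2 v.2)].

Definition opposite n m (o : vertex n m) (sx sy tx ty : bool) : Prop :=
  [disjoint qboundary sx sy o & qboundary tx ty o].

From mathcomp Require Import all_boot all_order.
From mathcomp Require Import zify.
Set Implicit Arguments. Unset Strict Implicit. Unset Printing Implicit Defensive.

(* Let u and v be the neighbours of the origin o one step away from Q along the
   two axes (into the half-planes containing Q').  A vertex w of the closed
   quadrant Q is one step farther from both u and v than from o, and a vertex
   of Q' is one step closer to both, so no such w resolves u and v.  Opposite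
   quadrants have opposite signs on both axes, so taking Q or Q' as the
   reference quadrant covers A, B and C.  All four axis neighbours exist
   because an interior vertex has exactly the four candidate neighbours. *)

Section Grid.

Variables n m : nat.

Definition coords (y : vertex n m) : nat * nat := (y.1 : nat, y.2 : nat).

Lemma coords_inj : injective coords.
Proof.
by case=> [y1 y2] [z1 z2] [/val_inj -> /val_inj ->].
Qed.

(* For p = 0 the candidate (p.-1, q) is (p, q) itself, which is never adjacent. *)
Definition axis_neighbors (p q : nat) : seq (nat * nat) :=
  [:: (p.-1, q); (p.+1, q); (p, q.-1); (p, q.+1)].

Lemma gadj_coords (o y : vertex n m) :
  gadj o y -> coords y \in axis_neighbors o.1 o.2.
Proof.
rewrite /gadj /gdist /distn => /eqP dist1.
by rewrite !inE !xpair_eqE; lia.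
Qed.

Lemma interior_neighbor (o : vertex n m) c :
  interior o -> c \in axis_neighbors o.1 o.2 -> exists2 y, gadj o y & coords y = c.
Proof.
move=> /eqP card_nbrs.
set s := map coords (enum [set y | gadj o y]).
have uniq_s : uniq s by rewrite (map_inj_uniq coords_inj) enum_uniq.
have sub_s : {subset s <= axis_neighbors o.1 o.2}.
  by move=> x /mapP[y]; rewrite mem_enum inE => /gadj_coords adj_y ->.
have size_s : size s = 4 by rewrite size_map -cardE -card_nbrs.
have [|_ eq_s] := uniq_min_size uniq_s sub_s; first by rewrite size_s.
by rewrite -eq_s => /mapP[y]; rewrite mem_enum inE => ? ->; exists y.
Qed.

Lemma interior_neighbor_x (o : vertex n m) b : interior o ->
  exists u : vertex n m, [/\ gadj o u, u.2 = o.2 & side b o.1 u.1].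
Proof.
move=> int_o.
have [|u adj_u [e1 e2]] :=
  interior_neighbor (c := (if b then o.1.+1 else o.1.-1, o.2 : nat)) int_o.
  by case: b; rewrite !inE eqxx ?orbT.
exists u; split=> //; first exact: val_inj.
move: adj_u; rewrite /gadj /gdist /distn /side e1 e2 => /eqP.
by case: b e1 => /= e1; lia.
Qed.

Lemma interior_neighbor_y (o : vertex n m) b : interior o ->
  exists v : vertex n m, [/\ gadj o v, v.1 = o.1 & side b o.2 v.2].
Proof.
move=> int_o.
have [|v adj_v [e1 e2]] :=
  interior_neighbor (c := (o.1 : nat, if b then o.2.+1 else o.2.-1)) int_o.
  by case: b; rewrite !inE eqxx ?orbT.
exists v; split=> //; first exact: val_inj.
move: adj_v; rewrite /gadj /gdist /distn /side e1 e2 => /eqP.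
by case: b e2 => /= e2; lia.
Qed.

Lemma interior_opposite (o : vertex n m) sx sy tx ty :
  interior o -> opposite o sx sy tx ty -> tx = ~~ sx /\ ty = ~~ sy.
Proof.
move=> int_o disj.
suff [neq_x neq_y] : tx != sx /\ ty != sy.
  by move: neq_x neq_y; case: (tx) (sx) (ty) (sy) => [] [] [] [].
split; apply/negP => /eqP eq_t.
- have [u [_ u2 side_u]] := interior_neighbor_x sx int_o.
  have bd_u t : u \in qboundary sx t o by rewrite inE side_u u2 eqxx.
  by have := disjointFr disj (bd_u sy); rewrite eq_t bd_u.
- have [v [_ v1 side_v]] := interior_neighbor_y sy int_o.
  have bd_v t : v \in qboundary t sy o by rewrite inE side_v v1 eqxx orbT.
  by have := disjointFr disj (bd_v sx); rewrite eq_t bd_v.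
Qed.

Definition unresolved_region (ax ay : bool) (o : vertex n m) : {set vertex n m} :=
  o |: (quadrant ax ay o :|: quadrant (~~ ax) (~~ ay) o :|: qboundary ax ay o).

Lemma unresolved_region_not_resolves (o u v : vertex n m) ax ay :
  gadj o u -> u.2 = o.2 -> side (~~ ax) o.1 u.1 ->
  gadj o v -> v.1 = o.1 -> side (~~ ay) o.2 v.2 ->
  {in unresolved_region ax ay o, forall w, ~~ resolves w u v}.
Proof.
rewrite /gadj /resolves /gdist /distn => /eqP du u2 su /eqP dv v1 sv [x y].
rewrite !inE negbK -!orbA u2 v1 in du dv *.
case: o u2 v1 du dv su sv => p q /= _ _ du dv su sv.
rewrite xpair_eqE -!val_eqE /side.
by case: ax ay su sv => [] [] /= su sv; lia.
Qed.

End Grid.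

Theorem lemma4 (n m : nat) (o : vertex n m)
  (sx sy tx ty : bool) (A B C : {set vertex n m}) :
  3 <= n -> 3 <= m ->
  interior o ->
  opposite o sx sy tx ty ->
  A \subset quadrant sx sy o ->
  B \subset quadrant tx ty o ->
  (C \subset qboundary sx sy o \/ C \subset qboundary tx ty o) ->
  exists u v : vertex n m,
    [/\ gadj o u, gadj o v, u.2 = o.2, v.1 = o.1 &
        forall w, w \in o |: (A :|: B :|: C) -> ~~ resolves w u v].
Proof.
move=> _ _ int_o opp sub_A sub_B sub_C.
have [eq_tx eq_ty] := interior_opposite int_o opp; subst tx ty.
have [ax [ay sub]] : exists ax ay,
    o |: (A :|: B :|: C) \subset unresolved_region ax ay o.
  case: sub_C => sub_C; [exists sx, sy | exists (~~ sx), (~~ sy)];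
    rewrite /unresolved_region ?negbK setUS //.
  - by rewrite !setUSS.
  - by rewrite [quadrant (~~ sx) _ _ :|: _]setUC !setUSS.
have [u [adj_u u2 su]] := interior_neighbor_x (~~ ax) int_o.
have [v [adj_v v1 sv]] := interior_neighbor_y (~~ ay) int_o.
exists u, v; split=> // w /(subsetP sub).
exact: unresolved_region_not_resolves.
Qed.
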